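(* (Ennaoui–Selberg identity.) Let $f$ be an L-additive arithmetic function whose associated completely multiplicative function $h_f$ is nonzero-valued, and let $\Lambda_f$ be its generalized von Mangoldt function. Then for every integer $n>1$, $$\frac{\Lambda_f(n)f(n)}{h_f(n)}+\sum_{d\mid n}\Lambda_f(d)\Lambda_f\!\left(\frac{n}{d}\right)=\sum_{d\mid n}\mu\!\left(\frac{n}{d}\right)\frac{f^2(d)}{h_f^2(d)},$$ i.e. $\frac{f\Lambda_f}{h_f}+\Lambda_f\ast\Lambda_f=\mu\ast\left(\frac{f}{h_f}\right)^2$.
   Context: An arithmetic function $f:\mathbb{N}\to\mathbb{C}$ is L-additive if there is a completely multiplicative function $h_f$ such that $f(mn)=f(m)h_f(n)+f(n)h_f(m)$ for all positive integers $m,n$; such an $h_f$ is fixed. $\Lambda_f(n)=\frac{f(p)}{h_f(p)}$ if $n=p^k$ for some prime $p$ and integer $k\geq1$, and $0$ otherwise. $\mu$ is the Möbius function and $\ast$ is Dirichlet convolution; products and quotients of arithmetic functions are pointwise. *)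

From HB Require Import structures.
From mathcomp Require Import all_boot all_order all_algebra.
From mathcomp Require Import complex.
Set Implicit Arguments. Unset Strict Implicit. Unset Printing Implicit Defensive.
Import Order.TTheory GRing.Theory Num.Theory.
Local Open Scope ring_scope.

(* Arithmetic functions are maps nat -> C; only values at n >= 1 matter. *)

Definition completely_multiplicative (C : nzRingType) (h : nat -> C) : Prop :=
  h 1%N = 1 /\ forall m n : nat, (0 < m)%N -> (0 < n)%N -> h (m * n)%N = h m * h n.

Definition L_additive_wrt (C : nzRingType) (f h : nat -> C) : Prop :=
  completely_multiplicative h /\
  forall m n : nat, (0 < m)%N -> (0 < n)%N ->
    f (m * n)%N = f m * h n + f n * h m.

(* Generalized von Mangoldt function: f(p)/h(p) if n = p^k (p prime, k >= 1),
   and 0 otherwise.  n = p^k with k >= 1 iff primes n = [:: p]. *)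
Definition vonMangoldt_f (C : fieldType) (f h : nat -> C) (n : nat) : C :=
  if primes n is [:: p] then f p / h p else 0.

Definition squarefree (n : nat) : bool :=
  (0 < n)%N && all (fun p => logn p n == 1%N) (primes n).

Definition mobius (C : nzRingType) (n : nat) : C :=
  if squarefree n then (-1) ^+ size (primes n) else 0.

Definition dconv (C : nzRingType) (a b : nat -> C) (n : nat) : C :=
  \sum_(d <- divisors n) a d * b (n %/ d)%N.

From HB Require Import structures.
From mathcomp Require Import all_boot all_order all_algebra.
From mathcomp Require Import complex ring.
Set Implicit Arguments. Unset Strict Implicit. Unset Printing Implicit Defensive.
Import Order.TTheory GRing.Theory Num.Theory.
Local Open Scope ring_scope.

(* Put g := f / h_f.  L-additivity of f says exactly that g is completely
   additive, and Lambda_f is the von Mangoldt function of g, i.e. g p on the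
   powers of the prime p; hence Lambda_f * 1 = g.  Summing the left-hand side
   over the divisors of n gives
     sum_(d | n) Lambda(d) (g d + g (n/d)) = g n * sum_(d | n) Lambda(d) = g n ^ 2,
   and Moebius inversion yields the identity. *)

Lemma divn_dvd_gt0 n d : (0 < n)%N -> (d %| n)%N -> (0 < n %/ d)%N.
Proof. by move=> n_gt0 dn; rewrite divn_gt0 ?(dvdn_gt0 n_gt0 dn) ?(dvdn_leq n_gt0 dn). Qed.

Lemma divn_divn n d : (0 < n)%N -> (d %| n)%N -> (n %/ (n %/ d))%N = d.
Proof. by move=> n_gt0 dn; rewrite divnA // mulKn. Qed.

Lemma filter_dvdn_divisors n d : (0 < n)%N -> (d %| n)%N ->
  [seq e <- divisors n | e %| d]%N = divisors d.
Proof.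
move=> n_gt0 dn; have d_gt0 := dvdn_gt0 n_gt0 dn.
apply: (irr_sorted_eq ltn_trans ltnn).
- exact/sorted_filter/sorted_divisors_ltn/ltn_trans.
- exact: sorted_divisors_ltn.
move=> e; rewrite mem_filter -!dvdn_divisors //.
by apply: andb_idr => /dvdn_trans; apply.
Qed.

Section DivisorSums.
Variable V : nmodType.

Lemma big_divisors_dvdn (F : nat -> V) n d : (0 < n)%N -> (d %| n)%N ->
  \sum_(e <- divisors n | (e %| d)%N) F e = \sum_(e <- divisors d) F e.
Proof. by move=> n_gt0 dn; rewrite -big_filter filter_dvdn_divisors. Qed.

Lemma big_divisors_divn (F : nat -> V) n : (0 < n)%N ->
  \sum_(d <- divisors n) F (n %/ d)%N = \sum_(d <- divisors n) F d.
Proof.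
move=> n_gt0; rewrite -(big_map (divn n) xpredT F); apply/perm_big/uniq_perm.
- rewrite map_inj_in_uniq ?divisors_uniq // => a b.
  rewrite -!dvdn_divisors // => an bn eq_ab.
  by rewrite -(divn_divn n_gt0 an) eq_ab divn_divn.
- exact: divisors_uniq.
move=> d; apply/mapP/idP => [[e] | ].
  by rewrite -!dvdn_divisors // => /dvdn_div en ->.
rewrite -dvdn_divisors // => dn; exists (n %/ d)%N; last by rewrite divn_divn.
by rewrite -dvdn_divisors ?dvdn_div.
Qed.

Lemma big_divisors_mulnl (F : nat -> V) n e : (0 < n)%N -> (e %| n)%N ->
  \sum_(d <- divisors n | (e %| d)%N) F (d %/ e)%N = \sum_(c <- divisors (n %/ e)) F c.
Proof.
move=> n_gt0 en; have e_gt0 := dvdn_gt0 n_gt0 en.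
have ne_gt0 := divn_dvd_gt0 n_gt0 en.
rewrite -big_filter -[RHS](eq_bigr _ (fun c _ => congr1 F (mulKn c e_gt0))).
rewrite -(big_map (muln e) xpredT (fun d => F (d %/ e)%N)).
apply/perm_big/uniq_perm.
- by rewrite filter_uniq ?divisors_uniq.
- by rewrite map_inj_uniq ?divisors_uniq // => a b /eqP; rewrite eqn_pmul2l // => /eqP.
move=> d; rewrite mem_filter -dvdn_divisors //; apply/andP/mapP => [[ed dn] | [c]].
  exists (d %/ e)%N; last by rewrite mulnC divnK.
  by rewrite -dvdn_divisors // dvdn_divRL // divnK.
rewrite -dvdn_divisors // => cn ->; split; first exact: dvdn_mulr.
by rewrite mulnC -dvdn_divRL.
Qed.

Lemma big_divisors_nest (F : nat -> nat -> V) n : (0 < n)%N ->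
  \sum_(d <- divisors n) \sum_(e <- divisors d) F e (d %/ e)%N
  = \sum_(e <- divisors n) \sum_(c <- divisors (n %/ e)) F e c.
Proof.
move=> n_gt0; rewrite (eq_big_seq (fun d =>
  \sum_(e <- divisors n | (e %| d)%N) F e (d %/ e)%N)); last first.
  by move=> d; rewrite -dvdn_divisors // => dn; rewrite big_divisors_dvdn.
under eq_bigr do rewrite big_mkcond; rewrite exchange_big /=.
apply: eq_big_seq => e; rewrite -dvdn_divisors // => en.
by rewrite -(big_divisors_mulnl (F e)) // [RHS]big_mkcond; apply: eq_bigr.
Qed.

Lemma exchange_big_divisors (F : nat -> nat -> V) n : (0 < n)%N ->
  \sum_(e <- divisors n) \sum_(c <- divisors (n %/ e)) F e c
  = \sum_(c <- divisors n) \sum_(e <- divisors (n %/ c)) F e c.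
Proof.
move=> n_gt0; rewrite -big_divisors_nest // -big_divisors_nest //.
apply: eq_big_seq => d; rewrite -dvdn_divisors // => dn.
have d_gt0 := dvdn_gt0 n_gt0 dn.
rewrite -big_divisors_divn //; apply: eq_big_seq => e.
by rewrite -dvdn_divisors // => ed; rewrite divn_divn.
Qed.

End DivisorSums.

Section Mobius.
Variable C : nzRingType.

Lemma mobius_prime_mul p c : prime p -> (0 < c)%N -> ~~ (p %| c)%N ->
  mobius C (p * c) = - mobius C c.
Proof.
move=> p_pr c_gt0 p_ndvd_c; have p_gt0 := prime_gt0 p_pr.
have primes_pc : perm_eq (primes (p * c)) (p :: primes c).
  apply: uniq_perm; first exact: primes_uniq.
    by rewrite /= primes_uniq andbT mem_primes p_pr c_gt0.
  by move=> q; rewrite primesM // primes_prime // !inE.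
have logn_pc q : q \in primes c -> logn q (p * c) = logn q c.
  rewrite mem_primes => /and3P[_ _ qc]; rewrite lognM // logn_prime //.
  by case: eqP => [eq_qp | _]; first by rewrite -eq_qp qc in p_ndvd_c.
rewrite /mobius /squarefree (perm_all _ primes_pc) (perm_size primes_pc) /=.
rewrite muln_gt0 p_gt0 c_gt0 lognM // logn_prime // eqxx logn_coprime ?prime_coprime //=.
rewrite (eq_in_all (a2 := fun q => logn q c == 1%N)) => [|q /logn_pc -> //].
by case: ifP; rewrite ?exprS ?mulN1r ?oppr0.
Qed.

Lemma mobius_prime_mul_dvd p c : prime p -> (0 < c)%N -> (p %| c)%N ->
  mobius C (p * c) = 0.
Proof.
move=> p_pr c_gt0 pc; have p_gt0 := prime_gt0 p_pr.
have p_primes : p \in primes (p * c).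
  by rewrite mem_primes p_pr muln_gt0 p_gt0 c_gt0 dvdn_mulr.
have logn_p : logn p (p * c) != 1%N.
  have : (0 < logn p c)%N by rewrite logn_gt0 mem_primes p_pr c_gt0.
  by rewrite lognM // (logn_prime _ p_pr) eqxx; case: logn.
rewrite /mobius /squarefree; case: ifP => // /andP[_ /allP/(_ _ p_primes)].
by rewrite (negbTE logn_p).
Qed.

Lemma big_divisors_mobius n : (0 < n)%N ->
  \sum_(d <- divisors n) mobius C d = (n == 1%N)%:R.
Proof.
move=> n_gt0; have [n_le1 | n_gt1] := leqP n 1.
  have -> : n = 1%N by apply/eqP; rewrite eqn_leq n_le1 n_gt0.
  by rewrite big_seq1.
pose p := pdiv n; have p_pr : prime p := pdiv_prime n_gt1.
have pn : (p %| n)%N := pdiv_dvd n.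
pose m := (n %/ p)%N; have m_gt0 : (0 < m)%N := divn_dvd_gt0 n_gt0 pn.
have ndvd_divisors : [seq d <- divisors n | ~~ (p %| d)%N]
                   = [seq d <- divisors m | ~~ (p %| d)%N].
  apply: (irr_sorted_eq ltn_trans ltnn);
    try exact/sorted_filter/sorted_divisors_ltn/ltn_trans.
  move=> d; rewrite !mem_filter -!dvdn_divisors //; case: (p %| d)%N / idP => //= pd.
  by rewrite -{1}(divnK pn) Gauss_dvdl // coprime_sym prime_coprime //; apply/negP.
have sum_dvd : \sum_(d <- divisors n | (p %| d)%N) mobius C d
              = - \sum_(c <- divisors m | ~~ (p %| c)%N) mobius C c.
  rewrite (eq_bigr (fun d => mobius C (p * (d %/ p)))) => [|d pd]; last first.
    by rewrite mulnC divnK.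
  rewrite (big_divisors_mulnl (fun c => mobius C (p * c))) // -/m.
  rewrite (bigID (fun c => p %| c)%N) /= big1_seq ?add0r => [|c /andP[pc]]; last first.
    by rewrite -dvdn_divisors // => cm; rewrite mobius_prime_mul_dvd ?(dvdn_gt0 m_gt0 cm).
  rewrite -sumrN big_seq_cond [RHS]big_seq_cond; apply: eq_bigr => c.
  rewrite -dvdn_divisors // => /andP[cm pc].
  by rewrite mobius_prime_mul ?(dvdn_gt0 m_gt0 cm).
rewrite (bigID (fun d => p %| d)%N) /= sum_dvd addrC -big_filter ndvd_divisors.
by rewrite big_filter subrr eqn_leq leqNgt n_gt1.
Qed.

Lemma mobius_inversion (a : nat -> C) n : (0 < n)%N ->
  dconv (mobius C) (fun m => \sum_(d <- divisors m) a d) n = a n.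
Proof.
move=> n_gt0; rewrite /dconv (eq_bigr (fun d =>
  \sum_(c <- divisors (n %/ d)) mobius C d * a c)) => [|d _]; last first.
  by rewrite big_distrr.
rewrite exchange_big_divisors // (eq_big_seq (fun c => (c == n)%:R * a c)).
  rewrite (bigD1_seq n) ?divisors_id ?divisors_uniq //= eqxx mul1r big1 ?addr0 //.
  by move=> c /negbTE->; rewrite mul0r.
move=> c; rewrite -dvdn_divisors // => cn.
rewrite -big_distrl big_divisors_mobius ?divn_dvd_gt0 //=; congr ((nat_of_bool _)%:R * _).
apply/idP/eqP => [/eqP nc1 | ->]; first by rewrite -(divnK cn) nc1 mul1n.
by rewrite divnn n_gt0.
Qed.

End Mobius.

Definition completely_additive (V : zmodType) (g : nat -> V) : Prop :=
  forall m n : nat, (0 < m)%N -> (0 < n)%N -> g (m * n)%N = g m + g n.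

Definition vonMangoldt (V : zmodType) (g : nat -> V) (n : nat) : V :=
  if primes n is [:: p] then g p else 0.

Lemma vonMangoldt_fE (F : fieldType) (f h : nat -> F) :
  vonMangoldt_f f h = vonMangoldt (fun n => f n / h n).
Proof. by []. Qed.

Lemma completely_additive_div (F : fieldType) (f h : nat -> F) :
  L_additive_wrt f h -> (forall n, (0 < n)%N -> h n != 0) ->
  completely_additive (fun n => f n / h n).
Proof.
move=> [[_ hM] fM] h_neq0 m n m_gt0 n_gt0.
have hm := h_neq0 m m_gt0; have hn := h_neq0 n n_gt0.
by rewrite fM // hM //; field; apply/andP.
Qed.

Lemma primes_seq1E d q : primes d = [:: q] -> d = (q ^ logn q d)%N.
Proof.
move=> d_primes; have d_gt0 : (0 < d)%N by case: d d_primes.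
by rewrite {1}(prod_prime_decomp d_gt0) prime_decompE d_primes big_map big_seq1.
Qed.

Lemma prime_power_dvd_mul_prime p m q d : prime p -> (0 < m)%N ->
  (d %| p * m)%N -> ~~ (d %| m)%N -> primes d = [:: q] -> d = (p ^ (logn p m).+1)%N.
Proof.
move=> p_pr m_gt0 d_pm d_m d_primes; have p_gt0 := prime_gt0 p_pr.
have q_pr : prime q by have := mem_head q [::]; rewrite -d_primes mem_primes => /andP[].
have d_q := primes_seq1E d_primes; set j := logn q d in d_q.
have [eq_qp | neq_qp] := eqVneq q p; last first.
  have cop : coprime d p by rewrite d_q coprimeXl // prime_coprime // dvdn_prime2.
  by move: d_pm; rewrite Gauss_dvdr // (negbTE d_m).
rewrite d_q eq_qp in d_pm d_m *; congr (_ ^ _)%N.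
have j_le : (j <= logn p (p * m))%N by rewrite -pfactor_dvdn ?muln_gt0 ?p_gt0.
have j_gt : (logn p m < j)%N by rewrite ltnNge -pfactor_dvdn.
rewrite lognM // (logn_prime _ p_pr) eqxx in j_le.
by apply/eqP; rewrite eqn_leq j_le j_gt.
Qed.

Lemma vonMangoldt_prime_power (V : zmodType) (g : nat -> V) p k :
  prime p -> (0 < k)%N -> vonMangoldt g (p ^ k) = g p.
Proof. by move=> p_pr k_gt0; rewrite /vonMangoldt primesX // primes_prime. Qed.

Section VonMangoldt.
Variables (V : zmodType) (g : nat -> V).
Hypothesis g_additive : completely_additive g.

Lemma completely_additive1 : g 1 = 0.
Proof. by apply: (@addrI _ (g 1)); rewrite -g_additive // addr0. Qed.

Lemma big_divisors_vonMangoldt_prime_mul p m : prime p -> (0 < m)%N ->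
  \sum_(d <- divisors (p * m)) vonMangoldt g d
  = \sum_(d <- divisors m) vonMangoldt g d + g p.
Proof.
move=> p_pr m_gt0; have p_gt0 := prime_gt0 p_pr.
have pm_gt0 : (0 < p * m)%N by rewrite muln_gt0 p_gt0.
rewrite (bigID (fun d => d %| m)%N) /= big_divisors_dvdn ?dvdn_mull //; congr (_ + _).
pose k := (logn p m).+1.
have pk_new : (p ^ k)%N \in [seq d <- divisors (p * m) | ~~ (d %| m)%N].
  rewrite mem_filter -dvdn_divisors // !pfactor_dvdn // ltnn.
  by rewrite lognM // (logn_prime _ p_pr) eqxx add1n leqnn.
rewrite -big_filter (bigD1_seq _ pk_new) ?filter_uniq ?divisors_uniq //=.
rewrite vonMangoldt_prime_power // big1_seq ?addr0 // => d /andP[d_neq].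
rewrite mem_filter -dvdn_divisors // => /andP[d_m d_pm].
rewrite /vonMangoldt; case d_primes: (primes d) => [|q [|//]] //.
by rewrite (prime_power_dvd_mul_prime p_pr m_gt0 d_pm d_m d_primes) eqxx in d_neq.
Qed.

Lemma big_divisors_vonMangoldt n : (0 < n)%N ->
  \sum_(d <- divisors n) vonMangoldt g d = g n.
Proof.
elim/ltn_ind: n => n IHn n_gt0; have [n_le1 | n_gt1] := leqP n 1.
  have -> : n = 1%N by apply/eqP; rewrite eqn_leq n_le1 n_gt0.
  by rewrite big_seq1 completely_additive1.
pose p := pdiv n; have p_pr : prime p := pdiv_prime n_gt1.
pose m := (n %/ p)%N; have m_gt0 : (0 < m)%N := divn_dvd_gt0 n_gt0 (pdiv_dvd n).
have n_pm : n = (p * m)%N by rewrite mulnC divnK ?pdiv_dvd.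
have m_lt_n : (m < n)%N by rewrite n_pm ltn_Pmull ?prime_gt1.
rewrite n_pm (big_divisors_vonMangoldt_prime_mul p_pr m_gt0) IHn //.
by rewrite g_additive ?(prime_gt0 p_pr) // addrC.
Qed.

End VonMangoldt.

Section Selberg.
Variables (C : comNzRingType) (g : nat -> C).
Hypothesis g_additive : completely_additive g.

Lemma big_divisors_selberg n : (0 < n)%N ->
  \sum_(d <- divisors n) (vonMangoldt g d * g d + dconv (vonMangoldt g) (vonMangoldt g) d)
  = g n ^+ 2.
Proof.
move=> n_gt0; rewrite big_split /= /dconv.
rewrite (big_divisors_nest (fun e c => vonMangoldt g e * vonMangoldt g c)) //.
rewrite -big_split /= (eq_big_seq (fun e => vonMangoldt g e * g n)).
  by rewrite -big_distrl big_divisors_vonMangoldt.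
move=> e; rewrite -dvdn_divisors // => en; have e_gt0 := dvdn_gt0 n_gt0 en.
rewrite -big_distrr big_divisors_vonMangoldt ?divn_dvd_gt0 // -mulrDr.
by rewrite -g_additive ?divn_dvd_gt0 // mulnC divnK.
Qed.

Lemma selberg_identity n : (0 < n)%N ->
  vonMangoldt g n * g n + dconv (vonMangoldt g) (vonMangoldt g) n
  = dconv (mobius C) (fun d => g d ^+ 2) n.
Proof.
move=> n_gt0; rewrite -(mobius_inversion (fun d =>
  vonMangoldt g d * g d + dconv (vonMangoldt g) (vonMangoldt g) d) n_gt0).
apply: eq_big_seq => d.
by rewrite -dvdn_divisors // => dn; rewrite big_divisors_selberg ?divn_dvd_gt0.
Qed.

End Selberg.

Local Open Scope complex_scope.

Theorem theorem2p8 (R : rcfType) (f h : nat -> R[i])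
  (Hf : L_additive_wrt f h)
  (Hh : forall n : nat, (0 < n)%N -> h n != 0)
  (n : nat) (Hn : (1 < n)%N) :
  vonMangoldt_f f h n * f n / h n
    + dconv (vonMangoldt_f f h) (vonMangoldt_f f h) n
  = dconv (fun m => mobius R[i] m) (fun d => (f d / h d) ^+ 2) n.
Proof.
rewrite vonMangoldt_fE -mulrA.
exact: (selberg_identity (C := R[i]) (completely_additive_div Hf Hh) (ltnW Hn)).
Qed.
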